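(* Let $s,i$ be MIAs over $I$ and $O$ such that $i$ is input-enabled. If $i\ \mathbf{mioco}\ s$, then for every MIA $i'$ with $i'\sqsubseteq i$ it holds that $i'\ \mathbf{mioco}\ s$.
   Context: A Modal Interface Automaton (MIA) over disjoint alphabets $I,O$ is a tuple $(Q,I,O,\longrightarrow_\Box,\longrightarrow_\Diamond)$ with $Q$ a finite set of states and must/may transition relations $\longrightarrow_\Box,\longrightarrow_\Diamond\subseteq Q\times(I\cup O)\times Q$ such that every must transition is a may transition, and for inputs $i\in I$: must $i$-transitions are deterministic, and every may $i$-transition is a must transition. A MIA is input-enabled iff every state has an outgoing must transition for every input. MIA-refinement: $\mathcal R\subseteq P\times Q$ is a MIA-refinement iff for all $(p,q)\in\mathcal R$: (1) $q\overset{a}{\longrightarrow}_\Box q'$, $a\in I\cup O$, implies $\exists p'$: $p\overset{a}{\longrightarrow}_\Box p'$, $(p',q')\in\mathcal R$; (2) $p\overset{\alpha}{\longrightarrow}_\Diamond p'$, $\alpha\in O$, implies $\exists q'$: $q\overset{\alpha}{\longrightarrow}_\Diamond q'$, $(p',q')\in\mathcal R$; $p\sqsubseteq q$ iff some MIA-refinement contains $(p,q)$. For $\gamma\in\{\Box,\Diamond\}$: $init_\gamma(p)=\{\mu\in I\cup O\mid p\overset{\mu}{\longrightarrow}_\gamma\}$; $\delta_\Diamond(p)$ (may-quiescent) iff $init_\Box(p)\subseteq I$; $\delta_\Box(p)$ (must-quiescent) iff $init_\Diamond(p)\subseteq I$; the symbol $\delta_\gamma$ acts as a $\gamma$-self-loop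 at states $q$ with $\delta_\gamma(q)$; $p\ \mathrm{after}_\gamma\ \sigma$ is the set of states reachable from $p$ by a $\gamma$-path (including $\delta_\gamma$-loops) labeled $\sigma$ (for a set of states, the union); $Out_\gamma(P)=\{\mu\in O\mid\exists p\in P:p\overset{\mu}{\longrightarrow}_\gamma\}\cup\{\delta_\gamma\mid\exists p\in P:\delta_\gamma(p)\}$; $Straces_\gamma(p)$ is the set of words $\sigma$ over $I\cup O\cup\{\delta_\gamma\}$ with $p\overset{\sigma}{\longrightarrow}_\gamma$. For MIAs $s,i$ with $i$ input-enabled, $i\ \mathbf{mioco}\ s$ iff (1) for all $\sigma\in Straces_\Diamond(s)$: $Out_\Diamond(i\ \mathrm{after}_\Diamond\ \sigma)\subseteq Out_\Diamond(s\ \mathrm{after}_\Diamond\ \sigma)$, and (2) for all $\sigma\in Straces_\Box(i)$: $Out_\Box(s\ \mathrm{after}_\Box\ \sigma)\subseteq Out_\Box(i\ \mathrm{after}_\Box\ \sigma)$. *)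

From mathcomp Require Import all_boot.

(* Actions over disjoint alphabets I and O: the disjoint sum I + O
   (inl = input, inr = output). *)

Record MIA (I O : Type) := {
  st : finType;
  must : st -> I + O -> st -> Prop;
  may  : st -> I + O -> st -> Prop;
  init : st;
  must_may : forall p a q, must p a q -> may p a q;
  must_in_det : forall p i q q', must p (inl i) q -> must p (inl i) q' -> q = q';
  may_in_must : forall p i q, may p (inl i) q -> must p (inl i) q
}.
Arguments must {I O} _ _ _ _.
Arguments may {I O} _ _ _ _.
Arguments init {I O} _.
Arguments st {I O} _.

Inductive modality := Must | May.

Definition trans {I O} (g : modality) (M : MIA I O) : st M -> I + O -> st M -> Prop :=
  match g with Must => must M | May => may M end.

Definition input_enabled {I O} (M : MIA I O) : Prop :=
  forall (p : st M) (i : I), exists q, must M p (inl i) q.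

Definition is_MIA_refinement {I O} (P Q : MIA I O) (R : st P -> st Q -> Prop) : Prop :=
  forall p q, R p q ->
    (forall a q', must Q q a q' -> exists p', must P p a p' /\ R p' q') /\
    (forall (o : O) p', may P p (inr o) p' -> exists q', may Q q (inr o) q' /\ R p' q').

Definition refines_st {I O} (P Q : MIA I O) (p : st P) (q : st Q) : Prop :=
  exists R, is_MIA_refinement P Q R /\ R p q.

Definition MIA_refines {I O} (P Q : MIA I O) : Prop := refines_st P Q (init P) (init Q).

(* quiescence: delta_May p iff init_Must(p) ⊆ I ; delta_Must p iff init_May(p) ⊆ I *)
Definition quiescent {I O} (g : modality) (M : MIA I O) (p : st M) : Prop :=
  match g with
  | May  => forall a q, must M p a q -> exists i, a = inl i
  | Must => forall a q, may M p a q -> exists i, a = inl i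
  end.

(* labels of suspension traces: actions or the quiescence symbol delta_gamma *)
Inductive lab (I O : Type) := LA of I + O | LD.
Arguments LA {I O} _.
Arguments LD {I O}.

(* gamma-paths, with delta_gamma acting as a self-loop at quiescent states *)
Inductive reach {I O} (g : modality) (M : MIA I O) : st M -> seq (lab I O) -> st M -> Prop :=
| reach_nil p : reach g M p [::] p
| reach_act p a p' s q : trans g M p a p' -> reach g M p' s q -> reach g M p (LA a :: s) q
| reach_delta p s q : quiescent g M p -> reach g M p s q -> reach g M p (LD :: s) q.

Definition after {I O} (g : modality) (M : MIA I O) (s : seq (lab I O)) : st M -> Prop :=
  fun q => reach g M (init M) s q.

Definition Straces {I O} (g : modality) (M : MIA I O) (s : seq (lab I O)) : Prop :=
  exists q, reach g M (init M) s q.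

Definition Out {I O} (g : modality) (M : MIA I O) (P : st M -> Prop) (x : lab I O) : Prop :=
  match x with
  | LA (inl _) => False
  | LA (inr o) => exists p p', P p /\ trans g M p (inr o) p'
  | LD => exists p, P p /\ quiescent g M p
  end.

(* i mioco s (input-enabledness of i is a separate hypothesis) *)
Definition mioco {I O} (i s : MIA I O) : Prop :=
  (forall sigma, Straces May s sigma ->
     forall x, Out May i (after May i sigma) x -> Out May s (after May s sigma) x) /\
  (forall sigma, Straces Must i sigma ->
     forall x, Out Must s (after Must s sigma) x -> Out Must i (after Must i sigma) x).

(* A refinement i' of i has fewer may-traces and more must-traces than i, hence
   fewer may-outputs and more must-outputs after each trace.  For may-traces this
   needs i input-enabled: a may-input of i' is a must-input of i', so by
   determinism it is the one matching the must-input that i is guaranteed to have.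
   This settles the first mioco clause.  For the second, a must-trace that s can
   extend is a must-trace of i: along the trace, inputs are available in i by
   input-enabledness, and outputs and quiescence by the second clause for i. *)

From mathcomp Require Import all_boot.

Set Implicit Arguments.
Unset Strict Implicit.

Arguments must_in_det {I O m} {p i q q'}.
Arguments may_in_must {I O m} {p i q}.
Arguments must_may {I O m} {p a q}.

Section Traces.
Variables (I O : Type) (g : modality) (M : MIA I O).

Lemma reach_cat p t r u q :
  reach g M p t r -> reach g M r u q -> reach g M p (t ++ u) q.
Proof.
elim=> //= [p0 a p1 t0 q0 Hstep _ IH | p0 t0 q0 Hquiet _ IH] Hr.
- exact: reach_act Hstep (IH Hr).
- exact: reach_delta Hquiet (IH Hr).
Qed.

Lemma reach_rcons p t l q :
  reach g M p (rcons t l) q -> exists2 r, reach g M p t r & reach g M r [:: l] q.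
Proof.
elim: t p => [|a t IH] p /= H; first by exists p => //; exact: reach_nil.
inversion H as [|p0 a0 p1 t0 q0 Hstep Hr|p0 t0 q0 Hquiet Hr]; subst.
- have [r H1 H2] := IH _ Hr; exists r => //; exact: reach_act Hstep H1.
- have [r H1 H2] := IH _ Hr; exists r => //; exact: reach_delta Hquiet H1.
Qed.

Lemma Straces_rcons t l : Straces g M (rcons t l) -> Straces g M t.
Proof. by case=> q /reach_rcons [r Hr _]; exists r. Qed.

Lemma Out_after_Straces t x : Out g M (after g M t) x -> Straces g M t.
Proof. by case: x => [[a|o]|] //= [p] [] => [p' [] |]; exists p. Qed.

Lemma Straces_rcons_Out t x : (forall a, x <> LA (inl a)) ->
  Straces g M (rcons t x) <-> Out g M (after g M t) x.
Proof.
move=> x_not_input; split.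
- case=> q /reach_rcons [r Hr Hl].
  inversion Hl as [|p0 a p1 t0 q0 Hstep _|p0 t0 q0 Hquiet _]; subst => /=.
  + case: a Hstep Hl x_not_input => [a _ _ /(_ a) | o Hstep _ _] //.
    by exists r, p1.
  + by exists r.
- case: x x_not_input => [[a /(_ a)|o _ [r [q [Hr Hstep]]]] | _ [r [Hr Hquiet]]] //.
  + exists q; rewrite -cats1; apply: reach_cat Hr _.
    exact: reach_act Hstep (reach_nil _ _ _).
  + exists r; rewrite -cats1; apply: reach_cat Hr _.
    exact: reach_delta Hquiet (reach_nil _ _ _).
Qed.

End Traces.

Lemma Straces_rcons_input I O (M : MIA I O) t a :
  input_enabled M -> Straces Must M t -> Straces Must M (rcons t (LA (inl a))).
Proof.
move=> enabled [r Hr]; have [q Hstep] := enabled r a.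
exists q; rewrite -cats1; apply: reach_cat Hr _.
exact: (@reach_act _ _ Must) Hstep (reach_nil _ _ _).
Qed.

Section Refinement.
Variables (I O : Type) (i' i : MIA I O) (R : st i' -> st i -> Prop).
Hypothesis refR : is_MIA_refinement i' i R.

Lemma refines_must p' p a q :
  R p' p -> must i p a q -> exists2 q', must i' p' a q' & R q' q.
Proof. by move=> /refR [Hmust _] /Hmust [q' []]; exists q'. Qed.

Lemma refines_may_output p' p o q' :
  R p' p -> may i' p' (inr o) q' -> exists2 q, may i p (inr o) q & R q' q.
Proof. by move=> /refR [_ Hmay] /Hmay [q []]; exists q. Qed.

Lemma refines_may p' p a q' : input_enabled i ->
  R p' p -> may i' p' a q' -> exists2 q, may i p a q & R q' q.
Proof.
move=> enabled Rp; case: a => [x|o]; last exact: refines_may_output.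
move=> /may_in_must Hmust'.
have [q Hmust] := enabled p x.
have [q'' /(must_in_det Hmust') <- Rq] := refines_must Rp Hmust.
by exists q => //; exact: must_may.
Qed.

Lemma refines_quiescent_may p' p :
  R p' p -> quiescent May i' p' -> quiescent May i p.
Proof. by move=> Rp Hquiet a q /(refines_must Rp) [q' /Hquiet]. Qed.

Lemma refines_quiescent_must p' p :
  R p' p -> quiescent Must i p -> quiescent Must i' p'.
Proof.
move=> Rp Hquiet [x|o] q' Hmay; first by exists x.
by have [q /Hquiet] := refines_may_output Rp Hmay.
Qed.

Lemma reach_may_refines p' t q' p : input_enabled i ->
  reach May i' p' t q' -> R p' p -> exists2 q, reach May i p t q & R q' q.
Proof.
move=> enabled Hr; elim: Hr p => {p' t q'}
  [p' | p' a p1 t q' Hstep _ IH | p' t q' Hquiet _ IH] p Rp.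
- by exists p => //; exact: reach_nil.
- have [p2 Hstep2 Rp2] := refines_may enabled Rp Hstep.
  have [q Hr Rq] := IH _ Rp2; exists q => //.
  exact: (@reach_act _ _ May) Hstep2 Hr.
- have [q Hr Rq] := IH _ Rp; exists q => //.
  exact: reach_delta (refines_quiescent_may Rp Hquiet) Hr.
Qed.

Lemma reach_must_refined p t q p' :
  reach Must i p t q -> R p' p -> exists2 q', reach Must i' p' t q' & R q' q.
Proof.
move=> Hr; elim: Hr p' => {p t q} [p | p a p1 t q Hstep _ IH | p t q Hquiet _ IH] p' Rp.
- by exists p' => //; exact: reach_nil.
- have [p2 Hstep2 Rp2] := refines_must Rp Hstep.
  have [q' Hr Rq] := IH _ Rp2; exists q' => //.
  exact: (@reach_act _ _ Must) Hstep2 Hr.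
- have [q' Hr Rq] := IH _ Rp; exists q' => //.
  exact: reach_delta (refines_quiescent_must Rp Hquiet) Hr.
Qed.

Hypothesis Rinit : R (init i') (init i).

Lemma Out_may_refines t x : input_enabled i ->
  Out May i' (after May i' t) x -> Out May i (after May i t) x.
Proof.
move=> enabled; case: x => [[a|o]|] //=.
- move=> [p' [q' [Hr Hstep]]].
  have [p Hr' Rp] := reach_may_refines enabled Hr Rinit.
  have [q Hstep' _] := refines_may_output Rp Hstep.
  by exists p, q.
- move=> [p' [Hr Hquiet]].
  have [p Hr' Rp] := reach_may_refines enabled Hr Rinit.
  by exists p; split => //; exact: refines_quiescent_may Rp Hquiet.
Qed.

Lemma Out_must_refined t x :
  Out Must i (after Must i t) x -> Out Must i' (after Must i' t) x.
Proof.
case: x => [[a|o]|] //=.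
- move=> [p [q [Hr Hstep]]].
  have [p' Hr' Rp] := reach_must_refined Hr Rinit.
  have [q' Hstep' _] := refines_must Rp Hstep.
  by exists p', q'.
- move=> [p [Hr Hquiet]].
  have [p' Hr' Rp] := reach_must_refined Hr Rinit.
  by exists p'; split => //; exact: refines_quiescent_must Rp Hquiet.
Qed.

End Refinement.

Lemma mioco_Straces_must I O (s i : MIA I O) t :
  input_enabled i -> mioco i s -> Straces Must s t -> Straces Must i t.
Proof.
move=> enabled [_ Out_must_incl]; elim/last_ind: t => [_ | t x IH Hs].
  by exists (init i); exact: reach_nil.
have Ht : Straces Must i t := IH (Straces_rcons Hs).
have [[a ->] | not_input] : (exists a, x = LA (inl a)) \/ forall a, x <> LA (inl a)
  by case: (x) => [[a|o]|]; [left; exists a | right..].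
- exact: Straces_rcons_input.
- by apply/(Straces_rcons_Out _ _ _ not_input)/(Out_must_incl _ Ht)
          /(Straces_rcons_Out _ _ _ not_input).
Qed.

Theorem proposition2 (I O : Type) (s i : MIA I O) :
  input_enabled i -> mioco i s ->
  forall i' : MIA I O, MIA_refines i' i -> mioco i' s.
Proof.
move=> enabled mioco_is i' [R [refR Rinit]].
have [Out_may_incl Out_must_incl] := mioco_is; split.
- move=> t Hs x /(Out_may_refines refR Rinit enabled).
  exact: Out_may_incl.
- move=> t _ x Hx; apply: Out_must_refined refR Rinit _ _ _.
  have Ht : Straces Must i t :=
    mioco_Straces_must enabled mioco_is (Out_after_Straces Hx).
  exact: Out_must_incl Ht _ Hx.
Qed.
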